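(* Given a connected conjunctive query $q$ and $\varepsilon<1-1/\tau^*(q)$, there exists an algorithm that runs in one round in $\mathrm{MPC}(\varepsilon)$ and reports $\Theta\!\left(\mathbf E[|q(I)|]/p^{\tau^*(q)(1-\varepsilon)-1}\right)$ correct answers in expectation on matching databases.
   Context: Conjunctive queries $q(x_1,\ldots,x_k)=S_1(\bar x_1),\ldots,S_\ell(\bar x_\ell)$ are full and self-join-free; connected means the hypergraph (variables as vertices, hyperedge $\mathrm{vars}(S_j)$ per atom) is connected. $\tau^*(q)=\min\sum_iv_i$ over $v_i\ge0$ with $\sum_{i:x_i\in\mathrm{vars}(S_j)}v_i\ge1$ for all $j$. A matching database over $[n]$: each $S_j$ has exactly $n$ tuples and each column contains each value of $[n]$ exactly once; $\mathbf E[|q(I)|]$ is over a uniformly random matching database. $\mathrm{MPC}(\varepsilon)$: $p$ servers of unlimited power, private channels, rounds of computation and communication, each server receiving $O(N/p^{1-\varepsilon})$ bits ($O(n/p^{1-\varepsilon})$ tuples) per round, shared randomness. *)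

From HB Require Import structures.
From Stdlib Require Import Relations.
From mathcomp Require Import all_boot all_order all_algebra.
From mathcomp Require Import all_classical all_reals all_analysis.
Unset Implicit Arguments. Unset Printing Implicit Defensive.
Import Order.TTheory GRing.Theory Num.Theory.
Local Open Scope ring_scope.

(* A full, self-join-free conjunctive query q(x_0..x_{k-1}) = S_0(..),...,S_{l-1}(..):
   atom j has arity cq_ar j and its c-th column holds variable cq_var j c.
   Distinct atoms are distinct relation symbols (self-join-free); every
   variable is in the head (full). *)
Record cq := CQ {
  cq_k : nat;
  cq_l : nat;
  cq_ar : 'I_cq_l -> nat;
  cq_var : forall j : 'I_cq_l, 'I_(cq_ar j) -> 'I_cq_k }.

Definition cq_wf (q : cq) : Prop :=
  (0 < cq_l q)%N /\ (forall j, 0 < cq_ar q j)%N /\ (forall j, injective (cq_var q j)).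

Definition occurs (q : cq) (x : 'I_(cq_k q)) (j : 'I_(cq_l q)) : Prop :=
  exists c, cq_var q j c = x.

Definition adjacent (q : cq) (x y : 'I_(cq_k q)) : Prop :=
  exists j, occurs q x j /\ occurs q y j.

Definition cq_connected (q : cq) : Prop :=
  (forall x : 'I_(cq_k q), exists j, occurs q x j) /\
  (forall x y, clos_refl_trans _ (adjacent q) x y).

Definition frac_cover (R : realType) (q : cq) (v : 'I_(cq_k q) -> R) : Prop :=
  (forall i, 0 <= v i) /\
  (forall j : 'I_(cq_l q), 1 <= \sum_(i | [exists c, cq_var q j c == i]) v i).

Definition is_tau_star (R : realType) (q : cq) (t : R) : Prop :=
  (exists v : 'I_(cq_k q) -> R, frac_cover R q v /\ \sum_i v i = t) /\
  (forall v : 'I_(cq_k q) -> R, frac_cover R q v -> t <= \sum_i v i).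

Definition tup (q : cq) (n : nat) (j : 'I_(cq_l q)) := {ffun 'I_(cq_ar q j) -> 'I_n}.
Definition db (q : cq) (n : nat) := {dffun forall j : 'I_(cq_l q), {set tup q n j}}.

Definition matching_rel (n a : nat) (S : {set {ffun 'I_a -> 'I_n}}) : bool :=
  (#|S| == n) && [forall c : 'I_a, forall v : 'I_n, #|[set t in S | t c == v]| == 1%N].

Definition matching_dbs (q : cq) (n : nat) : {set db q n} :=
  [set I : db q n | [forall j, matching_rel n (cq_ar q j) (I j)]].

Definition answers (q : cq) (n : nat) (I : db q n) : {set {ffun 'I_(cq_k q) -> 'I_n}} :=
  [set x : {ffun 'I_(cq_k q) -> 'I_n} |
     [forall j, [ffun c => x (cq_var q j c)] \in I j]].

(* One-round MPC algorithm with p servers and shared randomness: the input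
   server holding S_j sends to each worker s a set of tuples of S_j chosen
   as a function of S_j, of the shared random seed w and of s; each worker
   then reports all answers derivable from what it received (these are
   always correct answers). *)
Record one_round_alg (q : cq) (n p : nat) := OneRound {
  seed : finType;
  seed0 : seed;
  route : forall j : 'I_(cq_l q), {set tup q n j} -> seed -> 'I_p -> {set tup q n j};
  route_sub : forall j S w s, route j S w s \subset S }.

Definition received (q : cq) (n p : nat) (A : one_round_alg q n p)
  (I : db q n) (w : seed q n p A) (s : 'I_p) : db q n :=
  [ffun j => route q n p A j (I j) w s].

Definition reported (q : cq) (n p : nat) (A : one_round_alg q n p)
  (I : db q n) (w : seed q n p A) : nat :=
  #|\bigcup_(s < p) answers q n (received q n p A I w s)|.

Definition load_ok (R : realType) (q : cq) (n p : nat) (A : one_round_alg q n p)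
  (eps C : R) : Prop :=
  forall I, I \in matching_dbs q n -> forall (w : seed q n p A) (s : 'I_p),
    ((\sum_j #|route q n p A j (I j) w s|)%N)%:R <= C * n%:R / (p%:R `^ (1 - eps)).

Definition expected_reported (R : realType) (q : cq) (n p : nat)
  (A : one_round_alg q n p) : R :=
  (\sum_(I in matching_dbs q n) \sum_(w : seed q n p A) (reported q n p A I w)%:R)
  / (#|matching_dbs q n|%:R * #|seed q n p A|%:R).

Definition expected_output (R : realType) (q : cq) (n : nat) : R :=
  (\sum_(I in matching_dbs q n) #|answers q n I|%:R) / #|matching_dbs q n|%:R.

From mathcomp Require Import all_boot all_order all_algebra.
From mathcomp Require Import all_classical all_reals all_analysis.
From mathcomp Require Import ring lra zify.
Import Order.TTheory GRing.Theory Num.Theory fintype finset.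
Set Implicit Arguments. Unset Strict Implicit. Unset Printing Implicit Defensive.
Local Open Scope ring_scope.

(* Take an optimal fractional vertex cover v of q and
   a = 1 - eps, give variable x_i a share P_i ~ p^(a v_i), hash each variable
   independently into its share, and let server s own the s-th cell of the
   grid of hash values; every tuple is sent to the servers whose cell agrees
   with its hashes.  The grid has ~ p^(a tau) >= p cells, so a fixed answer
   lands in an owned cell with probability exactly p / #cells, which is
   p^(1 - a tau) up to the factor 2^k lost in rounding the shares.  Since v
   covers each atom, the cells seen by an atom number at least p^a, so on a
   matching database the expected bucket of an atom in the cell of a fixed
   answer has size at most 1 + n / p^a; servers discard buckets exceeding 2l
   times this bound, which enforces the load and, by Markov's inequality,
   loses at most half of the answers. *)

Lemma cardE_sum (T : finType) (A : {set T}) : #|A| = (\sum_x (x \in A : nat))%N.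
Proof. by rewrite -sum1_card big_mkcond; apply: eq_bigr => x _; case: (x \in A). Qed.

Lemma card_preimset_sum (T U : finType) (f : T -> U) (C : {set U}) (P : pred T) :
  #|[set x | (f x \in C) && P x]| = (\sum_(c in C) #|[set x | (f x == c) && P x]|)%N.
Proof.
rewrite -sum1_card (partition_big f (mem C)) /=; last by move=> x; rewrite inE => /andP[].
apply: eq_bigr => c cC; rewrite -sum1_card; apply: eq_bigl => x; rewrite !inE.
by case: eqP => [->|]; rewrite ?cC ?andbF // andbC.
Qed.

Lemma markov_card (R : numDomainType) (T : finType) (D : pred T) (f : T -> nat) (L : R) :
  0 <= L -> #|[set x | D x && (L < (f x)%:R)]|%:R * L <= (\sum_(x | D x) f x)%:R.
Proof.
move=> L_ge0; rewrite -sum1_card natr_sum mulr_suml natr_sum.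
rewrite [leRHS](bigID (fun x => L < (f x)%:R)) /= -[leLHS]addr0.
apply: lerD; last by apply: sumr_ge0 => x _; rewrite ler0n.
rewrite (eq_bigl (fun x => D x && (L < (f x)%:R))); last by move=> x; rewrite inE.
by apply: ler_sum => x /andP[_ /ltW]; rewrite mul1r.
Qed.

Lemma prodr_powR (R : realType) (a : R) (I : finType) (P : pred I) (f : I -> R) :
  0 < a -> \prod_(i | P i) a `^ f i = a `^ (\sum_(i | P i) f i).
Proof.
move=> a_gt0; apply: (big_ind2 (fun x y => x = a `^ y)) => [|x1 x2 y1 y2 -> ->|//].
  by rewrite powRr0.
by rewrite powRD // (gt_eqF a_gt0) implybT.
Qed.

Lemma card_ffun_fixed (D T : finType) (Z : {set D}) (c : T) :
  (#|[set f : {ffun D -> T} | [forall a in Z, f a == c]]| * #|T| ^ #|Z| = #|T| ^ #|D|)%N.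
Proof.
have -> : #|[set f : {ffun D -> T} | [forall a in Z, f a == c]]| =
    #|(family (fun a => if a \in Z then pred1 c else predT) : simpl_pred {ffun D -> T})|.
  apply: eq_card => f; rewrite !inE; apply/forall_inP/familyP => [fc a|fc a aZ].
    by case: ifP => aZ //; rewrite inE fc.
  by have := fc a; rewrite aZ.
rewrite card_family foldrE big_map big_enum /= (bigID (mem Z)) /=.
rewrite (eq_bigr (fun _ => 1)); last by move=> a ->; rewrite card1.
rewrite (eq_bigr (fun _ => #|T|) (P := fun a => a \notin Z)); last by move=> a /negbTE ->.
rewrite big1 // mul1n !prod_nat_const -expnD -(cardC Z) addnC.
by congr (expn _ (addn _ _)); apply: eq_card => a; rewrite !inE.
Qed.

Section HashFamilies.
Variables (D : finType) (k : nat) (P : 'I_k -> nat).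

Definition hash_family := {dffun forall i : 'I_k, {ffun D -> 'I_(P i)}}.
Definition hash_cell := {dffun forall i : 'I_k, 'I_(P i)}.

Lemma card_hash_family : #|{: hash_family}| = (\prod_i P i ^ #|D|)%N.
Proof.
rewrite card_dep_ffun foldrE big_map big_enum; apply: eq_bigr => i _.
by rewrite card_ffun !card_ord.
Qed.

Lemma card_hash_cell : #|{: hash_cell}| = (\prod_i P i)%N.
Proof.
rewrite card_dep_ffun foldrE big_map big_enum; apply: eq_bigr => i _.
by rewrite card_ord.
Qed.

Lemma card_hash_family_fixed (Z : 'I_k -> {set D}) (c : hash_cell) :
  (#|[set h : hash_family | [forall i, [forall a in Z i, h i a == c i]]]|
    * \prod_i P i ^ #|Z i| = #|{: hash_family}|)%N.
Proof.
have -> : #|[set h : hash_family | [forall i, [forall a in Z i, h i a == c i]]]| =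
    #|(family (fun i => [set f : {ffun D -> 'I_(P i)} | [forall a in Z i, f a == c i]])
       : simpl_pred hash_family)|.
  apply: eq_card => h; rewrite !inE; apply/forallP/familyP => hc i; have := hc i;
    by rewrite inE.
rewrite card_family foldrE big_map big_enum card_hash_family -big_split /=.
apply: eq_bigr => i _; have := card_ffun_fixed (Z i) (c i); by rewrite card_ord.
Qed.

End HashFamilies.

Lemma matching_dbsP (q : cq) (n : nat) (I : db q n) j :
  I \in matching_dbs q n -> matching_rel n (cq_ar q j) (I j).
Proof. by rewrite inE => /forallP. Qed.

Lemma card_matching_rel n a S : matching_rel n a S -> #|S| = n.
Proof. by case/andP=> /eqP. Qed.

Lemma matching_rel_neq n a S (t t' : {ffun 'I_a -> 'I_n}) :
  matching_rel n a S -> t \in S -> t' \in S -> t != t' -> forall col, t col != t' col.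
Proof.
case/andP=> _ /forallP col_uniq tS t'S tt' col; apply: contraNneq tt' => tt'_col.
have /cards1P[u Su] := forallP (col_uniq col) (t' col).
have : t \in [set u in S | u col == t' col] by rewrite inE tS tt'_col eqxx.
have : t' \in [set u in S | u col == t' col] by rewrite inE t'S eqxx.
by rewrite Su !inE => /eqP -> /eqP ->.
Qed.

Definition atom_vars (q : cq) (j : 'I_(cq_l q)) : pred 'I_(cq_k q) :=
  [pred i | [exists col, cq_var q j col == i]].

Section HyperCube.
Variables (q : cq) (n p : nat) (share : 'I_(cq_k q) -> nat) (R : realType) (cap : R).

Local Notation k := (cq_k q).
Local Notation l := (cq_l q).
Local Notation answer := {ffun 'I_k -> 'I_n}.

(* The [.+1] keeps every hash range, hence the seed space, inhabited. *)
Definition hc_hashes := hash_family 'I_n (fun i => (share i).+1).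
Definition hc_cells := hash_cell (fun i => (share i).+1).

Definition hc_hash0 : hc_hashes := finfun (fun i => [ffun => ord0]).
Definition hc_cell0 : hc_cells := finfun (fun i => ord0).

Definition server_cell (s : 'I_p) : hc_cells := nth hc_cell0 (enum {: hc_cells}) s.
Definition owned_cells := [set server_cell s | s : 'I_p].

Definition cell_of (h : hc_hashes) (x : answer) : hc_cells := finfun (fun i => h i (x i)).

Definition matches j (h : hc_hashes) (t : tup q n j) (c : hc_cells) :=
  [forall col, h (cq_var q j col) (t col) == c (cq_var q j col)].

Definition bucket j (S : {set tup q n j}) h c := [set t in S | matches h t c].

(* Dropping oversized buckets is what makes the load bound hold deterministically. *)
Definition hc_route j (S : {set tup q n j}) h (s : 'I_p) : {set tup q n j} :=
  if #|bucket S h (server_cell s)|%:R <= cap then bucket S h (server_cell s) else finset.set0.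

Lemma hc_route_sub j S h s : hc_route (j := j) S h s \subset S.
Proof.
rewrite /hc_route; case: ifP => _; last exact: finset.sub0set.
by apply/subsetP => t; rewrite inE => /andP[].
Qed.

Definition hypercube : one_round_alg q n p :=
  @OneRound q n p hc_hashes hc_hash0 hc_route hc_route_sub.

Hypothesis cap_ge0 : 0 <= cap.

Lemma load_ok_hypercube (eps C : R) :
  l%:R * cap <= C * n%:R / p%:R `^ (1 - eps) -> load_ok R q n p hypercube eps C.
Proof.
move=> cap_le I _ h s /=; apply: le_trans cap_le.
rewrite natr_sum -[X in X%:R * _](card_ord l) mulr_natl -sumr_const.
apply: ler_sum => j _.
by rewrite /hc_route; case: ifP => // _; rewrite cards0.
Qed.

Lemma cell_ofP h x c : (cell_of h x == c) = [forall i, h i (x i) == c i].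
Proof.
apply/eqP/forallP => [<- i|hc]; first by rewrite ffunE.
by apply/ffunP => i; rewrite ffunE; apply/eqP.
Qed.

Lemma card_cell_of_eq x c :
  (#|[set h : hc_hashes | cell_of h x == c]| * #|{: hc_cells}| = #|{: hc_hashes}|)%N.
Proof.
rewrite -(card_hash_family_fixed (fun i => [set x i]) c) card_hash_cell.
under [in RHS]eq_bigr => i _ do rewrite cards1 expn1.
congr (_ * _)%N; apply: eq_card => h; rewrite !inE cell_ofP.
apply: eq_forallb => i; apply/idP/forall_inP => [hx a /set1P -> // | hZ].
exact: hZ _ (set11 _).
Qed.

Lemma card_owned_cells : (p <= #|{: hc_cells}|)%N -> #|owned_cells| = p.
Proof.
move=> p_le; rewrite card_imset ?card_ord // => s s' /eqP.
have lt_size (t : 'I_p) : (t < size (enum {: hc_cells}))%N.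
  by rewrite -cardE (leq_trans (ltn_ord t)).
by rewrite /server_cell nth_uniq ?enum_uniq ?lt_size // => /eqP/val_inj.
Qed.

Lemma received_hypercube I h s j :
  received q n p hypercube I h s j = hc_route (I j) h s.
Proof. by rewrite ffunE. Qed.

Lemma answers_received_sub I h s :
  answers q n (received q n p hypercube I h s) \subset answers q n I.
Proof.
apply/subsetP => x; rewrite !inE => /forallP recv; apply/forallP => j.
by have := recv j; rewrite received_hypercube; apply/subsetP; exact: hc_route_sub.
Qed.

Definition found I x h := [exists s, x \in answers q n (received q n p hypercube I h s)].

Lemma reported_hypercube I h :
  reported q n p hypercube I h = #|[set x in answers q n I | found I x h]|.
Proof.
apply: eq_card => x; rewrite finset.in_set.
apply/bigcupP/andP => [[s _ xs]|[_ /existsP[s xs]]]; last by exists s.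
split; last by apply/existsP; exists s.
by have /subsetP := answers_received_sub I h s; apply.
Qed.

Hypothesis var_occurs : forall i, exists j, occurs q i j.

Lemma found_cell I x h s :
  x \in answers q n (received q n p hypercube I h s) -> cell_of h x = server_cell s.
Proof.
rewrite inE => /forallP recv; apply/eqP; rewrite cell_ofP; apply/forallP => i.
have [j [col <-]] := var_occurs i.
have := recv j; rewrite received_hypercube /hc_route; case: ifP => _; last by rewrite inE.
by rewrite inE => /andP[_ /forallP /(_ col)]; rewrite ffunE.
Qed.

Lemma found_of_small_buckets I x h s :
  x \in answers q n I -> cell_of h x = server_cell s ->
  (forall j, #|bucket (I j) h (cell_of h x)|%:R <= cap) -> found I x h.
Proof.
rewrite inE => /forallP xI hx small; apply/existsP; exists s; rewrite inE.
apply/forallP => j; rewrite received_hypercube /hc_route -hx small inE xI /=.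
by apply/forallP => col; rewrite !ffunE.
Qed.

Definition atom_cells j := (\prod_(i | atom_vars j i) (share i).+1)%N.

Lemma atom_cells_gt0 j : (0 < atom_cells j)%N.
Proof. by rewrite prodn_gt0. Qed.

Hypothesis atom_inj : forall j, injective (cq_var q j).

(* A tuple disjoint from [x] puts one extra constraint, independent of the others,
   on the hash of every variable of atom [j]. *)
Lemma card_cell_of_eq_matches j (x : answer) (c : hc_cells) (t : tup q n j) :
  (forall col, t col != x (cq_var q j col)) ->
  (#|[set h | (cell_of h x == c) && matches h t c]| * (#|{: hc_cells}| * atom_cells j)
    = #|{: hc_hashes}|)%N.
Proof.
move=> t_neq_x.
pose Z i := x i |: [set t col | col in [pred col | cq_var q j col == i]].
rewrite -(card_hash_family_fixed Z c); congr (_ * _)%N.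
  apply: eq_card => h; rewrite !inE cell_ofP.
  apply/andP/forallP => [[/forallP hx /forallP ht] i|hZ].
    apply/forall_inP => a; rewrite !inE => /orP[/eqP ->|/imsetP[col]]; first exact: hx.
    by rewrite inE => /eqP <- ->; exact: ht.
  split; apply/forallP.
    by move=> i; have /forall_inP := hZ i; apply; rewrite !inE eqxx.
  move=> col; have /forall_inP := hZ (cq_var q j col); apply; rewrite !inE; apply/orP; right.
  by apply/imsetP; exists col; rewrite // inE.
rewrite card_hash_cell /atom_cells [X in (_ * X)%N]big_mkcond -big_split /=.
apply: eq_bigr => i _; case: ifP => [/existsP[col0 /eqP col0_i]|i_notin].
  have -> : Z i = [set x i; t col0].
    apply/setP => a; rewrite !inE; congr (_ || _); apply/imsetP/eqP => [[col]|->].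
      by rewrite inE => /eqP col_i ->; congr (t _); apply: atom_inj; rewrite col_i col0_i.
    by exists col0; rewrite // inE col0_i.
  rewrite cards2; case: eqP => [x_t|_]; last by rewrite /= expnS expn1.
  by have := t_neq_x col0; rewrite col0_i x_t eqxx.
have -> : Z i = [set x i].
  apply/setP => a; rewrite !inE; case: (a == x i) => //=.
  apply/negbTE/imsetP => [[col]]; rewrite inE => col_i _.
  by move: i_notin => /existsP; case; exists col.
by rewrite cards1 expn1 muln1.
Qed.

(* In the cell of an answer [x] the bucket holds the tuple of [x] itself, and each of the
   other [n - 1] tuples, which differ from it in every column, with probability
   [1 / atom_cells j]. *)
Lemma sum_bucket_le (I : db q n) j (x : answer) (c : hc_cells) :
  I \in matching_dbs q n -> x \in answers q n I ->
  ((\sum_(h | cell_of h x == c) #|bucket (I j) h c|) * (#|{: hc_cells}| * atom_cells j)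
    <= #|{: hc_hashes}| * atom_cells j + n * #|{: hc_hashes}|)%N.
Proof.
move=> Im xI.
have bucketE h : #|bucket (I j) h c| = (\sum_(t in I j) matches h t c)%N.
  rewrite cardE_sum [RHS]big_mkcond; apply: eq_bigr => t _.
  by rewrite inE; case: (t \in I j).
under eq_bigr => h _ do rewrite bucketE.
rewrite exchange_big /=.
have matchesE t : (\sum_(h | cell_of h x == c) matches h t c)%N
    = #|[set h | (cell_of h x == c) && matches h t c]|.
  rewrite cardE_sum big_mkcond; apply: eq_bigr => h _.
  by rewrite inE; case: (cell_of h x == c).
under eq_bigr => t _ do rewrite matchesE.
set xj : tup q n j := [ffun col => x (cq_var q j col)].
have xjI : xj \in I j by move: xI; rewrite inE => /forallP /(_ j).
rewrite big_distrl /= (bigD1 xj) //=; apply: leq_add.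
  rewrite mulnA leq_mul2r -(card_cell_of_eq x c) leq_mul2r.
  apply/orP; right; apply/orP; right; apply: subset_leq_card.
  by apply/subsetP => h; rewrite !inE => /andP[].
apply: (@leq_trans (\sum_(t in I j | t != xj) #|{: hc_hashes}|)).
  apply: leq_sum => t /andP[tI t_ne]; rewrite card_cell_of_eq_matches // => col.
  by have := matching_rel_neq (matching_dbsP j Im) tI xjI t_ne col; rewrite ffunE.
rewrite sum_nat_const -[X in (_ <= X * _)%N](card_matching_rel (matching_dbsP j Im)).
rewrite leq_mul2r; apply/orP; right; apply: subset_leq_card.
by apply/subsetP => t; rewrite unfold_in => /andP[].
Qed.

Definition finders I x := [set h | found I x h].
Definition hitting x := [set h | cell_of h x \in owned_cells].
Definition overflowing (I : db q n) j x :=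
  [set h | (cell_of h x \in owned_cells) && (cap < #|bucket (I j) h (cell_of h x)|%:R)].

Lemma finders_sub_hitting I x : finders I x \subset hitting x.
Proof.
apply/subsetP => h; rewrite !inE => /existsP[s xs].
by rewrite (found_cell xs); apply/imsetP; exists s.
Qed.

Lemma card_hitting x : (p <= #|{: hc_cells}|)%N ->
  (#|hitting x| * #|{: hc_cells}| = p * #|{: hc_hashes}|)%N.
Proof.
move=> p_le; have -> : #|hitting x| = #|[set h | (cell_of h x \in owned_cells) && true]|.
  by apply: eq_card => h; rewrite !inE andbT.
rewrite card_preimset_sum big_distrl /= (eq_bigr (fun _ => #|{: hc_hashes}|)) => [|c _].
  by rewrite sum_nat_const card_owned_cells.
rewrite -(card_cell_of_eq x c); congr (_ * _)%N.
by apply: eq_card => h; rewrite !inE andbT.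
Qed.

Lemma card_hitting_le I x : x \in answers q n I ->
  (#|hitting x| <= #|finders I x| + \sum_j #|overflowing I j x|)%N.
Proof.
move=> xI; rewrite !cardE_sum.
under [X in (_ <= _ + X)%N]eq_bigr => j _ do rewrite cardE_sum.
rewrite exchange_big -big_split /=; apply: leq_sum => h _.
rewrite !inE; case/boolP: (cell_of h x \in owned_cells) => //= /imsetP[s _ hs].
have [small|] := boolP [forall j, #|bucket (I j) h (cell_of h x)|%:R <= cap].
  by rewrite (found_of_small_buckets xI hs (fun j => forallP small j)).
rewrite negb_forall => /existsP[j]; rewrite -ltNge => big_j.
have hj : h \in overflowing I j x by rewrite inE big_j andbT hs; exact: imset_f.
by rewrite (bigD1 j) //= hj addnCA.
Qed.

Hypothesis cap_large :
  forall j, (2 * l * (atom_cells j + n))%N%:R <= cap * (atom_cells j)%:R.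

(* Markov's inequality against [sum_bucket_le]. *)
Lemma card_overflowing_cell I j x c : I \in matching_dbs q n -> x \in answers q n I ->
  (#|[set h | (cell_of h x == c) && (cap < #|bucket (I j) h c|%:R)%R]|
    * #|{: hc_cells}| * (2 * l) <= #|{: hc_hashes}|)%N.
Proof.
move=> Im xI.
have markov := markov_card (fun h => cell_of h x == c) (fun h => #|bucket (I j) h c|) cap_ge0.
have bucket_le := sum_bucket_le j c Im xI; move: markov bucket_le.
set B := #|_|; set S := (\sum_(h | _) _)%N => markov bucket_le.
rewrite -(ler_nat R) -(@ler_pM2r _ (atom_cells j + n)%:R); last first.
  by rewrite ltr0n addn_gt0 atom_cells_gt0.
apply: (@le_trans _ _ ((B * #|{: hc_cells}|)%:R * (cap * (atom_cells j)%:R))).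
  rewrite [X in X <= _](_ : _ = (B * #|{: hc_cells}|)%:R * (2 * l * (atom_cells j + n))%N%:R).
    by apply: ler_wpM2l; rewrite ?ler0n ?cap_large.
  by rewrite !natrM; ring.
apply: (@le_trans _ _ (S%:R * (#|{: hc_cells}| * atom_cells j)%:R)).
  rewrite [X in X <= _](_ : _ = B%:R * cap * (#|{: hc_cells}| * atom_cells j)%:R).
    by apply: ler_wpM2r; rewrite ?ler0n.
  by rewrite !natrM; ring.
by rewrite -!natrM ler_nat (leq_trans bucket_le) // mulnDr [(n * _)%N]mulnC.
Qed.

Lemma card_overflowing I j x : I \in matching_dbs q n -> x \in answers q n I ->
  (#|overflowing I j x| * #|{: hc_cells}| * (2 * l) <= p * #|{: hc_hashes}|)%N.
Proof.
move=> Im xI; rewrite /overflowing card_preimset_sum !big_distrl /=.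
apply: (@leq_trans (\sum_(c in owned_cells) #|{: hc_hashes}|)).
  apply: leq_sum => c _; apply: leq_trans (card_overflowing_cell j c Im xI).
  rewrite !leq_mul2r; apply/orP; right; apply/orP; right; apply: subset_leq_card.
  by apply/subsetP => h; rewrite !inE => /andP[/eqP <- ->]; rewrite eqxx.
rewrite sum_nat_const leq_mul2r; apply/orP; right.
by apply: leq_trans (leq_imset_card _ _) _; rewrite card_ord.
Qed.

Hypothesis p_le_cells : (p <= #|{: hc_cells}|)%N.

Lemma card_finders_le I x :
  (#|finders I x| * #|{: hc_cells}| <= p * #|{: hc_hashes}|)%N.
Proof.
rewrite -(card_hitting x p_le_cells) leq_mul2r.
by rewrite subset_leq_card ?orbT // finders_sub_hitting.
Qed.

Hypothesis l_gt0 : (0 < l)%N.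

(* An answer in an owned cell is found unless some atom overflows, and by
   [card_overflowing] overflows cost at most half of the hitting seeds. *)
Lemma card_finders_ge I x : I \in matching_dbs q n -> x \in answers q n I ->
  (p * #|{: hc_hashes}| <= 2 * (#|finders I x| * #|{: hc_cells}|))%N.
Proof.
move=> Im xI; have hitting_le := card_hitting_le xI.
have overflow_le : ((\sum_j #|overflowing I j x|) * #|{: hc_cells}| * (2 * l)
    <= l * (p * #|{: hc_hashes}|))%N.
  rewrite !big_distrl -[X in (_ <= X * _)%N](card_ord l) -sum_nat_const.
  by apply: leq_sum => j _; exact: card_overflowing.
move: (card_hitting x p_le_cells) hitting_le overflow_le.
set Hi := #|hitting x|; set F := #|finders I x|; set O := (\sum_j _)%N.
set K := #|{: hc_cells}|; set Y := (p * _)%N => hitting_eq hitting_le overflow_le.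
have : (Hi * K * (2 * l) <= (F + O) * K * (2 * l))%N by rewrite !leq_mul2r hitting_le !orbT.
rewrite hitting_eq !mulnDl => bound.
have : (Y * (2 * l) <= F * K * (2 * l) + l * Y)%N.
  by apply: leq_trans bound _; rewrite leq_add2l.
nia.
Qed.

Lemma sum_reported_hypercube I :
  (\sum_h reported q n p hypercube I h = \sum_(x in answers q n I) #|finders I x|)%N.
Proof.
under eq_bigr => h _ do rewrite reported_hypercube cardE_sum.
rewrite exchange_big /= [RHS]big_mkcond /=; apply: eq_bigr => x _.
rewrite cardE_sum; case: (boolP (x \in answers q n I)) => xI.
  by apply: eq_bigr => h _; rewrite finset.in_set xI /finders finset.in_set.
by rewrite big1 // => h _; rewrite finset.in_set (negbTE xI).
Qed.

Lemma card_hc_hashes_gt0 : (0 < #|{: hc_hashes}|)%N.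
Proof. by apply/card_gt0P; exists hc_hash0. Qed.

Local Notation sum_reported :=
  (\sum_(I in matching_dbs q n) \sum_h reported q n p hypercube I h)%N.
Local Notation sum_answers := (\sum_(I in matching_dbs q n) #|answers q n I|)%N.

Lemma expected_reported_scaledE :
  expected_reported R q n p hypercube * #|{: hc_cells}|%:R
  = (sum_reported * #|{: hc_cells}|)%:R / (#|matching_dbs q n| * #|{: hc_hashes}|)%:R.
Proof.
rewrite /expected_reported !natrM mulrAC; congr (_ * _ / _).
by rewrite natr_sum; apply: eq_bigr => I _; rewrite natr_sum.
Qed.

Lemma expected_output_scaledE :
  p%:R * expected_output R q n
  = (p * #|{: hc_hashes}| * sum_answers)%:R / (#|matching_dbs q n| * #|{: hc_hashes}|)%:R.
Proof.
have H_neq0 : #|{: hc_hashes}|%:R != 0 :> R by rewrite pnatr_eq0 -lt0n card_hc_hashes_gt0.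
rewrite /expected_output !natrM -natr_sum invfM.
rewrite [RHS](_ : _ = p%:R * (sum_answers%:R / #|matching_dbs q n|%:R)
  * (#|{: hc_hashes}|%:R / #|{: hc_hashes}|%:R)); last by ring.
by rewrite divff // mulr1.
Qed.

Lemma expected_reported_hypercube_le :
  expected_reported R q n p hypercube * #|{: hc_cells}|%:R <= p%:R * expected_output R q n.
Proof.
rewrite expected_reported_scaledE expected_output_scaledE.
apply: ler_wpM2r; first by rewrite invr_ge0 ler0n.
rewrite ler_nat big_distrl big_distrr /=; apply: leq_sum => I _.
rewrite sum_reported_hypercube big_distrl -[#|answers q n I|]sum1_card big_distrr /=.
by apply: leq_sum => x _; rewrite muln1 card_finders_le.
Qed.

Lemma expected_reported_hypercube_ge :
  p%:R * expected_output R q n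
    <= 2 * (expected_reported R q n p hypercube * #|{: hc_cells}|%:R).
Proof.
rewrite expected_reported_scaledE expected_output_scaledE mulrA -natrM.
apply: ler_wpM2r; first by rewrite invr_ge0 ler0n.
rewrite ler_nat big_distrl !big_distrr /=; apply: leq_sum => I Im.
rewrite sum_reported_hypercube big_distrl big_distrr -[#|answers q n I|]sum1_card big_distrr /=.
by apply: leq_sum => x xI; rewrite muln1 card_finders_ge.
Qed.

End HyperCube.

Lemma powR_ge1 (R : realType) (a x : R) : 1 <= a -> 0 <= x -> 1 <= a `^ x.
Proof. by move=> a_ge1 x_ge0; rewrite -(powRr0 a) ler_powR. Qed.

Section CoverShares.
Variables (R : realType) (k p : nat) (a : R) (v : 'I_k -> R).
Hypotheses (p_gt0 : (0 < p)%N) (a_ge0 : 0 <= a) (v_ge0 : forall i, 0 <= v i).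

Definition cover_share i := Num.truncn (p%:R `^ (a * v i)).

Lemma cover_share_ge i : p%:R `^ (a * v i) <= (cover_share i).+1%:R.
Proof. exact/ltW/truncnS_gt. Qed.

Lemma cover_share_le i : (cover_share i).+1%:R <= 2 * p%:R `^ (a * v i).
Proof.
have y_ge1 : 1 <= p%:R `^ (a * v i) by rewrite powR_ge1 ?ler1n ?mulr_ge0.
have := truncn_le (p%:R `^ (a * v i)); rewrite powR_ge0 -addn1 natrD /cover_share.
move=> /= trunc_le; lra.
Qed.

Lemma prod_cover_share_ge (P : pred 'I_k) :
  p%:R `^ (a * \sum_(i | P i) v i) <= (\prod_(i | P i) (cover_share i).+1)%:R.
Proof.
rewrite mulr_sumr -prodr_powR ?ltr0n // natr_prod; apply: ler_prod => i _.
by rewrite powR_ge0 cover_share_ge.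
Qed.

Lemma prod_cover_share_le :
  (\prod_i (cover_share i).+1)%:R <= 2 ^+ k * p%:R `^ (a * \sum_i v i).
Proof.
rewrite natr_prod mulr_sumr -prodr_powR ?ltr0n //.
rewrite (_ : 2 ^+ k = \prod_(i < k) 2); last by rewrite prodr_const card_ord.
rewrite -big_split /=; apply: ler_prod => i _.
by rewrite ler0n cover_share_le.
Qed.

End CoverShares.

Lemma frac_cover_sum_ge1 (R : realType) (q : cq) (v : 'I_(cq_k q) -> R) :
  (0 < cq_l q)%N -> frac_cover R q v -> 1 <= \sum_i v i.
Proof.
move=> l_gt0 [v_ge0 v_cover]; apply: le_trans (v_cover (Ordinal l_gt0)) _.
by rewrite [leRHS](bigID (atom_vars (Ordinal l_gt0))) lerDl sumr_ge0.
Qed.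

Lemma cover_exponent (R : realType) (q : cq) (v : 'I_(cq_k q) -> R) (eps : R) :
  (0 < cq_l q)%N -> frac_cover R q v -> eps < 1 - 1 / \sum_i v i ->
  0 < 1 - eps /\ 1 < (1 - eps) * \sum_i v i.
Proof.
move=> l_gt0 v_cover eps_lt.
have tau_gt0 : 0 < \sum_i v i by rewrite (lt_le_trans ltr01) ?frac_cover_sum_ge1.
have a_tau_gt1 : 1 < (1 - eps) * \sum_i v i by rewrite -ltr_pdivrMr //; lra.
by rewrite -(pmulr_lgt0 _ tau_gt0) (lt_trans ltr01).
Qed.

Lemma cap_large_of (R : realFieldType) (l m n : nat) (b : R) :
  0 < b -> b <= m%:R -> (2 * l * (m + n))%N%:R <= 2 * l%:R * (1 + n%:R / b) * m%:R.
Proof.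
move=> b_gt0 b_le; rewrite -mulrA !natrM natrD.
apply: ler_wpM2l; first by rewrite mulr_ge0 ?ler0n.
rewrite mulrDl mul1r lerD2l mulrAC ler_pdivlMr //.
by apply: ler_wpM2l; rewrite ?ler0n.
Qed.

Lemma cap_load_le (R : realFieldType) (l n : nat) (b : R) :
  0 < b -> b <= n%:R ->
  l%:R * (2 * l%:R * (1 + n%:R / b)) <= (4 * l ^ 2)%N%:R * n%:R / b.
Proof.
move=> b_gt0 b_le; have r_ge1 : 1 <= n%:R / b by rewrite ler_pdivlMr // mul1r.
rewrite natrM natrX -[leRHS]mulrA; move: r_ge1; set r := n%:R / b => r_ge1.
have : 0 <= l%:R ^+ 2 * (r - 1) by rewrite mulr_ge0 ?sqr_ge0 ?subr_ge0.
nra.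
Qed.

Lemma expected_le_ratio (R : realFieldType) (ER E m K X : R) :
  0 < m -> 0 < X -> X <= K -> 0 <= ER -> ER * K <= m * E -> ER <= E / (X / m).
Proof.
move=> m_gt0 X_gt0 X_le ER_ge0 ER_le; rewrite invf_div mulrA ler_pdivlMr //.
by apply: le_trans (ler_wpM2l ER_ge0 X_le) _; rewrite (mulrC E).
Qed.

Lemma expected_ge_ratio (R : realFieldType) (ER E m K X b : R) :
  0 < m -> 0 < X -> 0 < b -> 0 <= ER -> K <= b * X -> m * E <= 2 * (ER * K) ->
  (2 * b)^-1 * (E / (X / m)) <= ER.
Proof.
move=> m_gt0 X_gt0 b_gt0 ER_ge0 K_le mE_le.
have -> : (2 * b)^-1 * (E / (X / m)) = m * E / (2 * b * X).
  by field; rewrite !gt_eqF.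
rewrite ler_pdivrMr ?mulr_gt0 //; apply: le_trans mE_le _; nra.
Qed.

Lemma expected_reported_ge0 {R : realType} {q : cq} {n p : nat} {A : one_round_alg q n p} :
  0 <= expected_reported R q n p A.
Proof. by rewrite divr_ge0 ?sumr_ge0 // => I _; rewrite sumr_ge0 // => *; rewrite ler0n. Qed.

Section CoverHyperCube.
Variables (R : realType) (q : cq) (v : 'I_(cq_k q) -> R) (eps : R) (p n : nat).
Hypotheses (l_gt0 : (0 < cq_l q)%N) (atom_inj : forall j, injective (cq_var q j))
  (var_occurs : forall i, exists j, occurs q i j) (v_cover : frac_cover R q v).
Hypotheses (eps_ge0 : 0 <= eps) (a_gt0 : 0 < 1 - eps)
  (a_tau_ge1 : 1 <= (1 - eps) * \sum_i v i).
Hypotheses (p_gt0 : (0 < p)%N) (p_le_n : (p <= n)%N).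

Local Notation l := (cq_l q).
Local Notation a := (1 - eps).
Local Notation tau := (\sum_i v i).
Local Notation share := (cover_share p a v).

Definition cover_cap := 2 * l%:R * (1 + n%:R / p%:R `^ a).
Definition cover_hypercube := hypercube n p share cover_cap.

Let p_pos : 0 < p%:R :> R. Proof. by rewrite ltr0n. Qed.
Let pa_gt0 : 0 < p%:R `^ a. Proof. exact: powR_gt0. Qed.
Let pa_le_n : p%:R `^ a <= n%:R.
Proof. by rewrite (le_trans (ler1_powR _ _)) ?ler1n ?ler_nat // lerBlDr lerDl. Qed.

Let cap_ge0 : 0 <= cover_cap.
Proof. by rewrite !mulr_ge0 ?ler0n ?addr_ge0 ?divr_ge0 ?powR_ge0. Qed.

Let cells_ge : p%:R `^ (a * tau) <= #|{: hc_cells share}|%:R.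
Proof. by rewrite card_hash_cell prod_cover_share_ge. Qed.

Let cells_le : #|{: hc_cells share}|%:R <= 2 ^+ cq_k q * p%:R `^ (a * tau).
Proof. by rewrite card_hash_cell prod_cover_share_le ?(ltW a_gt0) //; case: v_cover. Qed.

Let p_le_cells : (p <= #|{: hc_cells share}|)%N.
Proof. by rewrite -(ler_nat R) (le_trans _ cells_ge) // le1r_powR ?ler1n. Qed.

(* The cover condition gives every atom at least [p ^ a] cells. *)
Let cap_large j :
  (2 * l * (atom_cells share j + n))%N%:R <= cover_cap * (atom_cells share j)%:R.
Proof.
apply: cap_large_of => //; apply: le_trans (prod_cover_share_ge _ _ p_gt0 _).
rewrite ler_powR ?ler1n // ler_peMr ?(ltW a_gt0) //.
by case: v_cover => _; apply.
Qed.

Let pow_exponent_pred : p%:R `^ (tau * a - 1) = p%:R `^ (a * tau) / p%:R.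
Proof.
by rewrite powRB ?pnatr_eq0 -?lt0n ?p_gt0 ?implybT // powRr1 ?ler0n // (mulrC tau).
Qed.

Lemma load_ok_cover_hypercube :
  load_ok R q n p cover_hypercube eps (4 * l ^ 2)%:R.
Proof. exact (load_ok_hypercube cap_ge0 (cap_load_le _ pa_gt0 pa_le_n)). Qed.

Lemma cover_hypercube_reported_ge :
  (2 ^+ (cq_k q).+1)^-1 * (expected_output R q n / p%:R `^ (tau * a - 1))
    <= expected_reported R q n p cover_hypercube.
Proof.
rewrite pow_exponent_pred exprS.
apply: (expected_ge_ratio p_pos (powR_gt0 _ p_pos) _ expected_reported_ge0 cells_le).
  by rewrite exprn_gt0.
exact: expected_reported_hypercube_ge cap_ge0 atom_inj cap_large p_le_cells l_gt0.
Qed.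

Lemma cover_hypercube_reported_le :
  expected_reported R q n p cover_hypercube
    <= expected_output R q n / p%:R `^ (tau * a - 1).
Proof.
rewrite pow_exponent_pred.
apply: (expected_le_ratio p_pos (powR_gt0 _ p_pos) cells_ge expected_reported_ge0).
exact (expected_reported_hypercube_le n cover_cap var_occurs p_le_cells).
Qed.

End CoverHyperCube.

Unset Implicit Arguments.

Theorem proposition2 (R : realType) (q : cq) (eps tau : R) :
  cq_wf q -> cq_connected q -> is_tau_star R q tau ->
  0 <= eps -> eps < 1 - 1 / tau ->
  exists C c1 c2 : R, 0 < C /\ 0 < c1 /\ 0 < c2 /\
    forall p : nat, (0 < p)%N ->
    exists N : nat, forall n : nat, (N <= n)%N ->
    exists A : one_round_alg q n p,
      load_ok R q n p A eps C /\
      c1 * (expected_output R q n / p%:R `^ (tau * (1 - eps) - 1))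
        <= expected_reported R q n p A /\
      expected_reported R q n p A
        <= c2 * (expected_output R q n / p%:R `^ (tau * (1 - eps) - 1)).
Proof.
move=> [l_gt0 [_ atom_inj]] [var_occurs _] [[v [v_cover <-]] _] eps_ge0 eps_lt.
have [a_gt0 /ltW a_tau_ge1] := cover_exponent l_gt0 v_cover eps_lt.
exists (4 * cq_l q ^ 2)%:R, (2 ^+ (cq_k q).+1)^-1, 1.
split; first by rewrite ltr0n muln_gt0 expn_gt0 l_gt0.
split; first by rewrite invr_gt0 exprn_gt0.
split=> // p p_gt0; exists p => n p_le_n; exists (cover_hypercube v eps p n).
split; first exact: load_ok_cover_hypercube.
split; first exact: cover_hypercube_reported_ge.
by rewrite mul1r; exact: cover_hypercube_reported_le.
Qed.
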